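(* Let $M(n,h)=\frac{2n+2-2\lceil 2\sqrt{n+h}\,\rceil}{4}$. A polyomino with $n$ tiles and $h$ holes is efficiently structured if and only if $h=M(n,h)$.
   Context: A polyomino is a finite union of closed unit squares (tiles) of the square lattice, any two meeting (if at all) in a whole edge, whose interior is connected. Its holes are the bounded connected components of its complement in the plane; the area of a hole is the number of unit squares needed to fill it. The dual graph has a vertex per tile and an edge between tiles sharing an edge; the polyomino is acyclic if its dual graph is a tree. $p_o(A)$ is the number of unit edges on the boundary of $A$ not bounding a hole. A polyomino with $n$ tiles and $h$ holes has minimal outer perimeter if $p_o(A)=2\lceil 2\sqrt{n+h}\,\rceil$, and is efficiently structured if it is acyclic, each hole has area one, and it has minimal outer perimeter. *)

From mathcomp Require Import all_boot all_order all_algebra.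
From mathcomp Require Import finmap.
From mathcomp Require Import boolp.
From mathcomp Require Import zify.
Set Implicit Arguments. Unset Strict Implicit. Unset Printing Implicit Defensive.
Import Order.TTheory GRing.Theory Num.Theory.
Local Open Scope fset_scope.

(* A unit square (tile / cell) of the square lattice is identified with the
   integer coordinates of its lower-left corner: [x, x+1] x [y, y+1]. *)
Definition cell := (int * int)%type.

Definition adj (c d : cell) : bool :=
  (absz (c.1 - d.1)%R + absz (c.2 - d.2)%R == 1)%N.

Definition nbrs (c : cell) : seq cell :=
  [:: (c.1 + 1, c.2)%R; (c.1 - 1, c.2)%R; (c.1, c.2 + 1)%R; (c.1, c.2 - 1)%R].

Definition connected_in (S : pred cell) : Prop :=
  forall c d, S c -> S d ->
    exists p : seq cell, [/\ path adj c p, last c p = d & all S p].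

(* A polyomino: a nonempty finite set of tiles whose interior is connected,
   i.e. whose dual graph (edge adjacency) is connected. *)
Definition polyomino (A : {fset cell}) : Prop :=
  A != fset0 /\ connected_in (fun c => c \in A).

(* A hole: a bounded connected component of the complement.  Discretely, it is
   a finite nonempty set of non-tile cells, connected by edge adjacency, and
   closed under edge adjacency among non-tile cells (a maximal such set). *)
Definition is_hole (A H : {fset cell}) : Prop :=
  [/\ H != fset0,
      (forall c, c \in H -> c \notin A),
      (forall c d, c \in H -> adj c d -> d \notin A -> d \in H)
    & connected_in (fun c => c \in H)].

Definition num_holes (A : {fset cell}) (h : nat) : Prop :=
  exists Hs : seq {fset cell},
    [/\ uniq Hs, (forall H, is_hole A H <-> H \in Hs) & size Hs = h].

Definition in_some_hole (A : {fset cell}) (d : cell) : Prop :=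
  exists H, is_hole A H /\ d \in H.

(* p_o(A): number of unit boundary edges of A not bounding a hole.  A unit
   boundary edge is a pair (tile c, non-tile neighbour d); it bounds a hole iff
   d lies in a hole. *)
Definition outer_perimeter (A : {fset cell}) : nat :=
  \sum_(c <- A) count (fun d => (d \notin A) && ~~ `[< in_some_hole A d >])
                      (nbrs c).

Definition dual_acyclic (A : {fset cell}) : Prop :=
  ~ exists p : seq cell, [/\ (3 <= size p)%N, all (fun c => c \in A) p
                           & ucycle adj p].

Definition dual_tree (A : {fset cell}) : Prop :=
  connected_in (fun c => c \in A) /\ dual_acyclic A.

(* ceil(2 * sqrt m) for a natural number m: the least natural k with
   2 sqrt m <= k, i.e. 4 m <= k^2. *)
Lemma ceil_2sqrt_ex (m : nat) : exists k : nat, (4 * m <= k * k)%N.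
Proof. exists (2 * m + 1)%N. lia. Qed.

Definition ceil_2sqrt (m : nat) : nat := ex_minn (ceil_2sqrt_ex m).

Definition minimal_outer_perimeter (A : {fset cell}) (h : nat) : Prop :=
  outer_perimeter A = (2 * ceil_2sqrt (#|`A| + h))%N.

Definition efficiently_structured (A : {fset cell}) (h : nat) : Prop :=
  [/\ dual_tree A,
      (forall H, is_hole A H -> #|`H| = 1%N)
    & minimal_outer_perimeter A h].

Definition M (n h : nat) : rat :=
  (((2 * n + 2)%:R - (2 * ceil_2sqrt (n + h))%:R) / 4%:R)%R.

(* Counting the four sides of every tile of A gives
     2 e + p_o(A) + sum_H p(H) = 4 n,
   where e is the number of edges of the dual graph and p(H) is the perimeter of the hole H.
   Connectivity gives e >= n - 1, with equality iff the dual graph is a tree.  Filling the holes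
   yields n + h or more cells whose perimeter is p_o(A), so the isoperimetric inequality
   p >= 2 ceil(2 sqrt m) gives p_o(A) >= 2 ceil(2 sqrt (n + h)); a set meeting r rows and
   c columns has at most r c <= (r + c)^2 / 4 cells and perimeter at least 2 (r + c).
   Each hole has perimeter at least 4, and at least 6 unless it is a single cell.  Hence
   4 h <= 2 n + 2 - 2 ceil(2 sqrt (n + h)), with equality iff the three bounds are tight,
   that is, iff A is efficiently structured. *)

From mathcomp Require Import all_boot all_algebra.
From mathcomp Require Import finmap zify boolp ring.
Set Implicit Arguments. Unset Strict Implicit. Unset Printing Implicit Defensive.
Import GRing.Theory Num.Theory.

Lemma adj_nbrs c d : adj c d = (d \in nbrs c).
Proof.
case: c d => [x y] [u v]; rewrite /adj /nbrs /= !inE !xpair_eqE.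
by apply/eqP/idP; lia.
Qed.

Lemma nbrs_uniq c : uniq (nbrs c).
Proof. case: c => x y; rewrite /nbrs /= !inE !xpair_eqE; lia. Qed.

Lemma nbrs_irr c : c \notin nbrs c.
Proof. case: c => x y; rewrite /nbrs /= !inE !xpair_eqE; lia. Qed.

Lemma adj_sym c d : adj c d = adj d c.
Proof. case: c d => [x y] [u v]; rewrite /adj /=; lia. Qed.

Lemma nbrs_sym c d : (d \in nbrs c) = (c \in nbrs d).
Proof. by rewrite -!adj_nbrs adj_sym. Qed.

Lemma count_sum (T : Type) (a : pred T) (s : seq T) :
  count a s = \sum_(x <- s) a x.
Proof. by elim: s => [|x s IH]; rewrite ?big_nil ?big_cons //= IH. Qed.

Lemma count_mem_sym (T : eqType) (s t : seq T) : uniq s -> uniq t ->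
  count (fun x => x \in t) s = count (fun x => x \in s) t.
Proof.
move=> us ut; rewrite -!size_filter; apply/perm_size/uniq_perm;
  rewrite ?filter_uniq // => x; by rewrite !mem_filter andbC.
Qed.

Lemma count_le1_has (T : eqType) (a : pred T) (s : seq T) : uniq s ->
  {in s &, forall x y, a x -> a y -> x = y} -> count a s = has a s.
Proof.
elim: s => //= x s IH /andP [xs us] a1.
rewrite IH //; last by move=> y z ys zs; apply: a1; rewrite inE ?ys ?zs orbT.
case ax: (a x) => //=; case: hasP => // [[y ys ay]].
by move: xs; rewrite (a1 x y) ?inE ?eqxx ?ys ?orbT.
Qed.

Lemma count_split_sub (T : Type) (a b : pred T) (s : seq T) : (forall x, b x -> a x) ->
  count a s = count (fun x => a x && ~~ b x) s + count b s.
Proof.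
move=> ba; rewrite -count_predUI [count (predI _ _) s](_ : _ = 0) ?addn0.
  apply: eq_count => x /=.
  by case bx: (b x); [rewrite orbT ba | rewrite orbF andbT].
by elim: s => //= x s ->; case: (b x); rewrite /= ?andbF ?andbT.
Qed.

Lemma count_ge2 (T : eqType) (a : pred T) (s : seq T) x y :
  x \in s -> y \in s -> x != y -> a x -> a y -> 2 <= count a s.
Proof.
move=> xs ys xy ax ay; rewrite -size_filter.
apply: (uniq_leq_size (s1 := [:: x; y])) => [|z]; first by rewrite /= inE xy.
by rewrite !inE mem_filter => /orP [] /eqP ->; rewrite ?ax ?ay.
Qed.

Lemma count_ge2P (T : eqType) (a : pred T) (s : seq T) : uniq s -> 2 <= count a s ->
  exists x y, [/\ x \in s, y \in s, a x, a y & x != y].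
Proof.
move=> us; rewrite -size_filter.
have mem_as z : z \in filter a s -> z \in s /\ a z by rewrite mem_filter => /andP [].
case: (filter a s) (filter_uniq a us) mem_as => [|x [|y f]] //= /andP [xyf _] mem_as _.
have [xs ax] := mem_as x (mem_head _ _).
have [ys ay] : y \in s /\ a y by apply: mem_as; rewrite !inE eqxx orbT.
by exists x, y; split => //; apply: contraNneq xyf => ->; apply: mem_head.
Qed.

Lemma sum_nbrs_mem_sym (X Y : seq cell) : uniq X -> uniq Y ->
  \sum_(c <- X) count (fun d => d \in Y) (nbrs c) =
  \sum_(d <- Y) count (fun c => c \in X) (nbrs d).
Proof.
move=> uX uY.
under eq_bigr => c _ do rewrite count_mem_sym ?nbrs_uniq // count_sum.
rewrite exchange_big; apply: eq_bigr => d _.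
by rewrite count_mem_sym ?nbrs_uniq // count_sum; apply: eq_bigr => c _; rewrite nbrs_sym.
Qed.

(* For duplicate-free [S], [degsum S] is twice the number of edges of the dual graph of [S]
   and [perim S] is the number of unit edges on its boundary. *)
Definition degsum (S : seq cell) := \sum_(c <- S) count (fun d => d \in S) (nbrs c).

Definition perim (S : seq cell) := \sum_(c <- S) count (fun d => d \notin S) (nbrs c).

Lemma degsum_perim S : degsum S + perim S = 4 * size S.
Proof.
rewrite /degsum /perim -big_split (eq_bigr (fun _ => 4)) => [|c _]; last first.
  exact: (count_predC (fun d => d \in S)).
by rewrite big_const_seq count_predT iter_addn_0 mulnC.
Qed.

Lemma degsum1 c : degsum [:: c] = 0.
Proof.
rewrite /degsum big_seq1; apply/eqP; rewrite -leqn0 leqNgt -has_count.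
by apply/hasPn => d dc; rewrite inE; apply: contraTneq dc => ->; apply: nbrs_irr.
Qed.

Lemma perim1 c : perim [:: c] = 4.
Proof. by rewrite /perim big_seq1; case: c => x y; rewrite /nbrs /= !inE !xpair_eqE; lia. Qed.

Lemma degsum_perm (W W' : seq cell) : perm_eq W W' -> degsum W = degsum W'.
Proof.
move=> eqWW'; rewrite /degsum (perm_big _ eqWW'); apply: eq_bigr => c _.
by apply: eq_count => d; rewrite (perm_mem eqWW').
Qed.

Lemma degsum_cons (W : seq cell) v : uniq W -> v \notin W ->
  degsum (v :: W) = degsum W + 2 * count (fun d => d \in W) (nbrs v).
Proof.
move=> uW vW; rewrite /degsum big_cons.
have -> : count (fun d => d \in v :: W) (nbrs v) = count (fun d => d \in W) (nbrs v).
  apply: eq_in_count => d dv; rewrite in_cons.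
  by case: eqP dv => // ->; rewrite (negbTE (nbrs_irr v)).
have -> : \sum_(c <- W) count (fun d => d \in v :: W) (nbrs c) =
          \sum_(c <- W) ((c \in nbrs v) + count (fun d => d \in W) (nbrs c)).
  apply: eq_bigr => c _; rewrite !count_sum.
  rewrite nbrs_sym -(count_uniq_mem v (nbrs_uniq c)) count_sum -big_split /=.
  apply: eq_bigr => d _; rewrite in_cons; case: eqP => [->|] /=; last by rewrite add0n.
  by rewrite (negbTE vW).
rewrite big_split -(count_sum (fun c => c \in nbrs v)) count_mem_sym ?nbrs_uniq //.
by rewrite addnA addnn -mul2n addnC.
Qed.

(** * Isoperimetric inequality *)

Lemma ceil_2sqrt_sq m : 4 * m <= ceil_2sqrt m * ceil_2sqrt m.
Proof. by rewrite /ceil_2sqrt; case: ex_minnP. Qed.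

Lemma ceil_2sqrt_min m k : 4 * m <= k * k -> ceil_2sqrt m <= k.
Proof. by rewrite /ceil_2sqrt; case: ex_minnP => k0 _ min_k0 /min_k0. Qed.

Lemma ceil_2sqrt_gt m k : k * k < 4 * m -> k < ceil_2sqrt m.
Proof.
move=> lt_k; rewrite ltnNge; apply/negP => le_c.
by have := ceil_2sqrt_sq m; have := leq_mul le_c le_c; lia.
Qed.

Lemma leq_ceil_2sqrt m m' : m <= m' -> ceil_2sqrt m <= ceil_2sqrt m'.
Proof. by move=> le_mm'; apply: ceil_2sqrt_min; have := ceil_2sqrt_sq m'; lia. Qed.

Lemma iter_exit (T : eqType) (S : seq T) (sh : T -> T) (phi : T -> int) x :
  (forall y, phi (sh y) = (phi y + 1)%R) -> x \in S ->
  exists2 k, iter k sh x \in S & sh (iter k sh x) \notin S.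
Proof.
move=> phi_sh xS.
have [m mS] : exists m, iter m sh x \notin S.
  have phi_iter k : phi (iter k sh x) = (phi x + k%:Z)%R.
    by elim: k => [|k IH] /=; rewrite ?addr0 // phi_sh IH; lia.
  have [/allP allS|/allPn [m _ mS]] :=
    boolP (all (fun k => iter k sh x \in S) (iota 0 (size S).+1)); last by exists m.
  have : size (iota 0 (size S).+1) <= size S.
    rewrite -(size_map (fun k => iter k sh x)); apply: uniq_leq_size.
      by rewrite map_inj_uniq ?iota_uniq // => i j /(congr1 phi); rewrite !phi_iter; lia.
    by move=> y /mapP [k /allS kS ->].
  by rewrite size_iota ltnn.
elim: m mS => [|m IH] /=; first by rewrite xS.
by case: (boolP (iter m sh x \in S)) => [mS mS1|/IH //]; exists m.
Qed.

Lemma size_lines_le_exits (T : eqType) (S : seq T) (sh : T -> T) (line phi : T -> int) :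
  (forall x, line (sh x) = line x) -> (forall x, phi (sh x) = (phi x + 1)%R) ->
  size (undup (map line S)) <= count (fun x => sh x \notin S) S.
Proof.
move=> line_sh phi_sh; rewrite -size_filter -(size_map line).
apply: uniq_leq_size => [|y]; first exact: undup_uniq.
rewrite mem_undup => /mapP [x xS ->].
have [k kS k_exit] := iter_exit phi_sh xS.
have -> : line x = line (iter k sh x) by elim: k {kS k_exit} => //= k ->.
by apply: map_f; rewrite mem_filter k_exit.
Qed.

(* Every row met by [S] has a rightmost and a leftmost cell, every column a highest and a
   lowest one. *)
Lemma perim_ge_lines (S : seq cell) :
  2 * (size (undup (map fst S)) + size (undup (map snd S))) <= perim S.
Proof.
have -> : perim S =
    count (fun c => ((c.1 + 1)%R, c.2) \notin S) S
  + count (fun c => ((c.1 - 1)%R, c.2) \notin S) S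
  + (count (fun c => (c.1, (c.2 + 1)%R) \notin S) S
     + count (fun c => (c.1, (c.2 - 1)%R) \notin S) S).
  by rewrite /perim !count_sum -!big_split; apply: eq_bigr => c _; rewrite /= addn0 !addnA.
have right := @size_lines_le_exits _ S (fun c => ((c.1 + 1)%R, c.2)) snd fst
  (fun _ => erefl) (fun _ => erefl).
have left := @size_lines_le_exits _ S (fun c => ((c.1 - 1)%R, c.2)) snd (fun c => - c.1)%R
  (fun _ => erefl) (fun c => ltac:(rewrite /=; lia)).
have up := @size_lines_le_exits _ S (fun c => (c.1, (c.2 + 1)%R)) fst snd
  (fun _ => erefl) (fun _ => erefl).
have down := @size_lines_le_exits _ S (fun c => (c.1, (c.2 - 1)%R)) fst (fun c => - c.2)%R
  (fun _ => erefl) (fun c => ltac:(rewrite /=; lia)).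
apply: leq_trans _ (leq_add (leq_add right left) (leq_add up down)).
by rewrite addnn -mul2n addnn -mul2n -mulnDr addnC.
Qed.

Lemma size_le_lines (S : seq cell) : uniq S ->
  size S <= size (undup (map fst S)) * size (undup (map snd S)).
Proof.
move=> uS; rewrite -(size_allpairs pair); apply: uniq_leq_size => // [[x y]] xyS.
by apply: allpairs_f; rewrite mem_undup; apply/mapP; exists (x, y).
Qed.

Lemma perim_ge_ceil_2sqrt (S : seq cell) : uniq S -> 2 * ceil_2sqrt (size S) <= perim S.
Proof.
move=> uS; have := perim_ge_lines S; have := size_le_lines uS.
set r := size (undup _); set c := size (undup _) => le_S_rc le_rc_perim.
suff : ceil_2sqrt (size S) <= r + c by lia.
have AGM := leq_of_leqif (nat_AGM2 r c).
by apply: ceil_2sqrt_min; rewrite mulnn; apply: leq_trans AGM; rewrite leq_mul2l.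
Qed.

Lemma perim_nonempty_ge (S : seq cell) : uniq S -> 0 < size S ->
  4 + 2 * (1 < size S) <= perim S.
Proof.
move=> uS size_gt0; apply: leq_trans (perim_ge_ceil_2sqrt uS) => /=.
case: ltnP => [two_lt|_].
  by have := @ceil_2sqrt_gt (size S) 2; lia.
by have := @ceil_2sqrt_gt (size S) 1; lia.
Qed.

(** * Degree sums of connected sets and trees *)

Lemma path_exit (W V : seq cell) a p : a \in W -> path adj a p ->
  last a p \notin W -> all (fun c => c \in V) p ->
  exists w v, [/\ w \in W, v \in V, v \notin W & adj w v].
Proof.
elim: p a => [|b p IH] a aW /=; first by rewrite aW.
case/andP=> ab pb lW /andP [bV pV].
by case: (boolP (b \in W)) => [bW|bW]; [apply: IH bW pb lW pV | exists a, b].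
Qed.

Lemma connected_exit (V W : seq cell) w0 : uniq V -> connected_in (fun c => c \in V) ->
  {subset W <= V} -> size W < size V -> w0 \in W ->
  exists w v, [/\ w \in W, v \in V, v \notin W & adj w v].
Proof.
move=> uV cV sWV ltWV w0W.
have [/allP VW|/allPn [x xV xW]] := boolP (all (fun x => x \in W) V).
  by have := uniq_leq_size uV VW; rewrite leqNgt ltWV.
have [p [adj_p last_p pV]] := cV w0 x (sWV _ w0W) xV.
by apply: path_exit w0W adj_p _ pV; rewrite last_p.
Qed.

Lemma connected_cons (W : seq cell) v w : connected_in (fun c => c \in W) ->
  w \in W -> adj w v -> connected_in (fun c => c \in v :: W).
Proof.
move=> cW wW wv c d; rewrite !in_cons.
have allW p : all (fun c => c \in W) p -> all (fun c => c \in v :: W) p.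
  by apply: sub_all => x xW; rewrite in_cons xW orbT.
case: eqP => [->|_]; case: eqP => [->|_] /= cW' dW.
- by exists [::].
- have [p [adj_p last_p pW]] := cW w d wW dW.
  by exists (w :: p); split; rewrite //= 1?adj_sym ?wv ?in_cons ?wW ?orbT ?allW.
- have [p [adj_p last_p pW]] := cW c w cW' wW.
  exists (rcons p v); split; rewrite ?last_rcons ?rcons_path ?adj_p ?last_p //.
  by rewrite all_rcons in_cons eqxx allW.
- have [p [adj_p last_p pW]] := cW c d cW' dW.
  by exists p; split; rewrite ?allW.
Qed.

Lemma connected_grow_ind (V : seq cell) (P : seq cell -> Prop) :
  uniq V -> connected_in (fun c => c \in V) ->
  (forall W : seq cell, perm_eq W V -> P W) ->
  (forall (W : seq cell) (w v : cell), uniq W -> {subset W <= V} -> size W < size V ->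
     w \in W -> v \in V -> v \notin W -> adj w v -> P (v :: W) -> P W) ->
  forall W w0, uniq W -> {subset W <= V} -> w0 \in W -> P W.
Proof.
move=> uV cV P_full P_step W w0 uW sWV w0W.
move def_k: (size V - size W) => k.
elim: k W uW sWV w0W def_k => [|k IH] W uW sWV w0W sizeW.
  by apply/P_full/uniq_perm => //; apply: (uniq_min_size uW sWV _).2; rewrite -subn_eq0 sizeW.
have ltWV : size W < size V by lia.
have [w [v [wW vV vW wv]]] := connected_exit uV cV sWV ltWV w0W.
apply: (P_step W w v) => //; apply: IH => /=.
- by rewrite vW.
- by move=> x; rewrite in_cons => /predU1P [->|/sWV].
- by rewrite in_cons w0W orbT.
- by rewrite subnS sizeW.
Qed.

Lemma degsum_grow (V W : seq cell) w0 : uniq V -> connected_in (fun c => c \in V) ->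
  uniq W -> {subset W <= V} -> w0 \in W ->
  degsum W + 2 * (size V - size W) <= degsum V.
Proof.
move=> uV cV; move: W w0.
apply: (connected_grow_ind (P := fun W => degsum W + 2 * (size V - size W) <= degsum V)) => //.
  by move=> W eqWV; rewrite (degsum_perm eqWV) (perm_size eqWV) subnn muln0 addn0.
move=> W w v uW _ _ wW _ vW wv.
have : 0 < count (fun d => d \in W) (nbrs v).
  by rewrite -has_count; apply/hasP; exists w; rewrite // -adj_nbrs adj_sym.
rewrite degsum_cons // [size (v :: W)]/= subnS; lia.
Qed.

Lemma degsum_connected (V : seq cell) : uniq V -> connected_in (fun c => c \in V) ->
  2 * (size V - 1) <= degsum V.
Proof.
case: V => // c V uV cV.
have sub_c : {subset [:: c] <= c :: V} by move=> x; rewrite inE => /eqP ->; apply: mem_head.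
by have := degsum_grow uV cV (erefl : uniq [:: c]) sub_c (mem_head c [::]); rewrite degsum1.
Qed.

Definition acyclic_in (V : seq cell) : Prop :=
  ~ exists p : seq cell, [/\ 3 <= size p, all (fun c => c \in V) p & ucycle adj p].

Lemma next_neq_prev (T : eqType) (p : seq T) x : uniq p -> 3 <= size p -> x \in p ->
  next p x != prev p x.
Proof.
move=> up size_p xp; case: (rot_to xp) => i s def_s.
have us : uniq (x :: s) by rewrite -def_s rot_uniq.
have : 3 <= size (x :: s) by rewrite -def_s size_rot.
rewrite -(next_rot i up) -(prev_rot i up) def_s.
case: s us {def_s} => [|y [|z t]] // us _; apply/eqP => next_prev_eq.
have := next_prev us x; rewrite -next_prev_eq.
move: us; rewrite /= !in_cons !negb_or => /andP [/and3P [xy xz _] /andP [/andP [yz _] _]].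
by rewrite eqxx /= eq_sym (negbTE xy) eqxx => /eqP; rewrite eq_sym (negbTE xz).
Qed.

Lemma degsum_ucycle (p : seq cell) : 3 <= size p -> ucycle adj p -> 2 * size p <= degsum p.
Proof.
move=> size_p /andP [cyc_p up].
rewrite mulnC -sum1_size big_distrl /= /degsum big_seq [X in _ <= X]big_seq.
apply: leq_sum => c cp; rewrite mul1n.
apply: (@count_ge2 _ _ _ (next p c) (prev p c)).
- by rewrite -adj_nbrs next_cycle.
- by rewrite -adj_nbrs adj_sym prev_cycle.
- exact: next_neq_prev.
- by rewrite /= mem_next.
- by rewrite /= mem_prev.
Qed.

Lemma acyclic_of_degsum (V : seq cell) : uniq V -> connected_in (fun c => c \in V) ->
  degsum V < 2 * size V -> acyclic_in V.
Proof.
move=> uV cV lt_deg [[|c p] [size_p pV /[dup] cyc_p /andP [_ up]]] //.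
have sub_p : {subset c :: p <= V} by move=> x /(allP pV).
have := degsum_grow uV cV up sub_p (mem_head c p).
have := degsum_ucycle size_p cyc_p; have := uniq_leq_size up sub_p; lia.
Qed.

Lemma cycle_of_two_nbrs (W : seq cell) v w1 w2 : connected_in (fun c => c \in W) ->
  v \notin W -> w1 \in W -> w2 \in W -> w1 != w2 -> adj v w1 -> adj w2 v ->
  exists p, [/\ 3 <= size p, all (fun c => c \in v :: W) p & ucycle adj p].
Proof.
move=> cW vW w1W w2W w12 vw1 w2v.
have [p [adj_p last_p pW]] := cW w1 w2 w1W w2W.
case: (shortenP adj_p) last_p => p' adj_p' uniq_p' sub_p' last_p'.
exists (v :: w1 :: p'); split.
- by case: p' {adj_p' uniq_p' sub_p'} last_p' => [/= eq12|//]; rewrite eq12 eqxx in w12.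
- rewrite /= mem_head in_cons w1W orbT /=; apply/allP => x /sub_p' xp.
  by rewrite in_cons (allP pW x xp) orbT.
- rewrite /ucycle cons_uniq uniq_p' andbT /= rcons_path adj_p' last_p' vw1 w2v /=.
  rewrite in_cons negb_or (contraNneq _ vW) => [|->//].
  by apply/negP => /sub_p' vp; move/negP: vW; apply; apply: (allP pW).
Qed.

Lemma degsum_grow_acyclic (V W : seq cell) w0 : uniq V -> connected_in (fun c => c \in V) ->
  acyclic_in V -> uniq W -> {subset W <= V} -> w0 \in W -> connected_in (fun c => c \in W) ->
  degsum V <= degsum W + 2 * (size V - size W).
Proof.
move=> uV cV acV; move: W w0.
apply: (connected_grow_ind (P := fun W => connected_in (fun c => c \in W) ->
  degsum V <= degsum W + 2 * (size V - size W))) => //.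
  by move=> W eqWV _; rewrite (degsum_perm eqWV) (perm_size eqWV) subnn muln0 addn0.
move=> W w v uW sWV ltWV wW vV vW wv IH cW.
have := IH (connected_cons cW wW wv); rewrite degsum_cons // [size (v :: W)]/= subnS.
(* Two neighbours of [v] in the connected set [W] would close a cycle through [v]. *)
suff : count (fun d => d \in W) (nbrs v) <= 1 by lia.
rewrite leqNgt; apply/negP => /(count_ge2P (nbrs_uniq v)) [w1 [w2 [v1 v2 w1W w2W w12]]].
have := cycle_of_two_nbrs cW vW w1W w2W w12.
rewrite adj_nbrs v1 adj_sym adj_nbrs v2 => /(_ isT isT) [p [size_p pW cyc_p]].
apply: acV; exists p; split => //.
by apply/allP => x /(allP pW); rewrite in_cons => /predU1P [->|/sWV].
Qed.

Lemma degsum_tree (V : seq cell) : uniq V -> connected_in (fun c => c \in V) ->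
  acyclic_in V -> degsum V <= 2 * (size V - 1).
Proof.
case: V => [|c V] uV cV acV; first by rewrite /degsum big_nil.
have sub_c : {subset [:: c] <= c :: V} by move=> x; rewrite inE => /eqP ->; apply: mem_head.
have c_conn : connected_in (fun d => d \in [:: c]).
  by move=> x y; rewrite !inE => /eqP -> /eqP ->; exists [::].
by have := degsum_grow_acyclic uV cV acV (erefl : uniq [:: c]) sub_c (mem_head c [::]) c_conn;
  rewrite degsum1.
Qed.

(** * Holes *)

Section Holes.
Variable A : {fset cell}.

Lemma hole_notin H c : is_hole A H -> c \in H -> c \notin A.
Proof. by case=> _ + _ _; apply. Qed.

Lemma hole_path H z p : is_hole A H -> z \in H -> path adj z p ->
  all (fun c => c \notin A) p -> last z p \in H.
Proof.
case=> _ _ closedH _; elim: p z => [|b p IH] z //= zH /andP [zb pb] /andP [bA pA].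
exact: IH (closedH _ _ zH zb bA) pb pA.
Qed.

Lemma hole_eq H1 H2 x : is_hole A H1 -> is_hole A H2 -> x \in H1 -> x \in H2 -> H1 = H2.
Proof.
have sub Ha Hb : is_hole A Ha -> is_hole A Hb -> x \in Ha -> x \in Hb -> {subset Ha <= Hb}.
  move=> ha hb xa xb y ya; have [_ _ _ conn_a] := ha.
  have [p [adj_p <- pa]] := conn_a x y xa ya.
  by apply: (hole_path hb xb adj_p); apply/allP => c /(allP pa); apply: hole_notin ha.
by move=> h1 h2 x1 x2; apply/fsetP => y; apply/idP/idP; apply: sub.
Qed.

Lemma hole_nbr H d e : is_hole A H -> d \in H -> e \in nbrs d -> (e \in A) = (e \notin H).
Proof.
move=> hH dH ed; have [_ notinA closedH _] := hH.
case eH: (e \in H); first exact/negbTE/notinA.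
by apply: (contraFT _ eH) => eA; apply: closedH dH _ eA; rewrite adj_nbrs.
Qed.

Variable Hs : seq {fset cell}.
Hypothesis uHs : uniq Hs.
Hypothesis HsP : forall H, is_hole A H <-> H \in Hs.

Lemma in_some_holeE d : `[< in_some_hole A d >] = has (fun H : {fset cell} => d \in H) Hs.
Proof.
apply/idP/hasP => [/asboolP [H [/HsP HHs dH]]|[H /HsP hH dH]]; first by exists H.
by apply/asboolP; exists H.
Qed.

Lemma sum_mem_holes d : \sum_(H <- Hs) (d \in H) = has (fun H : {fset cell} => d \in H) Hs.
Proof.
rewrite -count_sum; apply: count_le1_has => // H1 H2 /HsP h1 /HsP h2.
exact: hole_eq.
Qed.

Lemma count_holes_nbrs c :
  count (fun d => `[< in_some_hole A d >]) (nbrs c) =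
  \sum_(H <- Hs) count (fun d => d \in H) (nbrs c).
Proof.
rewrite count_sum; under eq_bigr => d _ do rewrite in_some_holeE -sum_mem_holes.
by rewrite exchange_big; apply: eq_bigr => H _; rewrite count_sum.
Qed.

Lemma sum_nbrs_hole H : is_hole A H ->
  \sum_(c <- A) count (fun d => d \in H) (nbrs c) = perim H.
Proof.
move=> hH; rewrite sum_nbrs_mem_sym ?fset_uniq //; apply: eq_big_seq => d dH.
by apply: eq_in_count => e ed; apply: hole_nbr hH dH ed.
Qed.

Lemma perim_outer_holes : perim A = outer_perimeter A + \sum_(H <- Hs) perim H.
Proof.
rewrite /perim /outer_perimeter.
transitivity (\sum_(c <- A)
  (count (fun d => (d \notin A) && ~~ `[< in_some_hole A d >]) (nbrs c) +
   \sum_(H <- Hs) count (fun d => d \in H) (nbrs c))).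
  apply: eq_bigr => c _; rewrite -count_holes_nbrs; apply: count_split_sub.
  by move=> d /asboolP [H [hH dH]]; apply: hole_notin hH dH.
rewrite big_split exchange_big /=; congr (_ + _).
by apply: eq_big_seq => H /HsP; apply: sum_nbrs_hole.
Qed.

(* Filling the holes of [A] gives at least [#|`A| + size Hs] cells, and the perimeter of the
   filled set is the outer perimeter of [A]. *)
Lemma outer_perimeter_ge : 2 * ceil_2sqrt (#|`A| + size Hs) <= outer_perimeter A.
Proof.
pose U := undup (flatten [seq enum_fset H | H : {fset cell} <- Hs]).
have memU d : (d \in U) = has (fun H : {fset cell} => d \in H) Hs.
  by rewrite mem_undup; apply/flatten_mapP/hasP => -[H HHs dH]; exists H.
pose F := enum_fset A ++ U.
have uF : uniq F.
  rewrite cat_uniq fset_uniq undup_uniq andbT /=; apply/hasPn => d.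
  by rewrite memU => /hasP [H /HsP hH dH]; apply: hole_notin hH dH.
have size_U : size Hs <= size U.
  pose rep (H : {fset cell}) : cell := nth (0%R, 0%R) (enum_fset H) 0.
  have repP H : H \in Hs -> rep H \in H.
    by move=> /HsP [nH _ _ _]; apply: mem_nth; move: nH; rewrite -cardfs_gt0.
  rewrite -(size_map rep); apply: uniq_leq_size => [|_ /mapP [H HHs ->]].
    rewrite map_inj_in_uniq // => H1 H2 H1s H2s eq_rep.
    by apply: (@hole_eq _ _ (rep H1)); rewrite ?HsP ?repP // eq_rep repP.
  by rewrite memU; apply/hasP; exists H; rewrite ?repP.
have perim_F : perim F = outer_perimeter A.
  have perim_U : \sum_(c <- U) count (fun d => d \notin F) (nbrs c) = 0.
    apply: big1_seq => c /andP [_]; rewrite memU => /hasP [H HHs cH].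
    apply/eqP; rewrite -leqn0 leqNgt -has_count; apply/hasPn => d dc /=.
    rewrite negbK mem_cat memU; have := hole_nbr ((HsP H).2 HHs) cH dc.
    by case: (d \in A) => //= /esym/negbFE dH; apply/hasP; exists H.
  rewrite /perim big_cat perim_U -[RHS]addn0; congr (_ + _).
  by apply: eq_bigr => c _; apply: eq_count => d; rewrite mem_cat negb_or memU in_some_holeE.
have := perim_ge_ceil_2sqrt uF; rewrite perim_F; apply: leq_trans.
by rewrite leq_mul2l leq_ceil_2sqrt // size_cat leq_add2l.
Qed.

Lemma perimeter_balance :
  degsum A + outer_perimeter A + \sum_(H <- Hs) perim H = 4 * #|`A|.
Proof. by rewrite -addnA -perim_outer_holes degsum_perim. Qed.

Lemma efficiently_structured_balance : polyomino A -> efficiently_structured A (size Hs) ->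
  4 * size Hs + 2 * ceil_2sqrt (#|`A| + size Hs) = 2 * #|`A| + 2.
Proof.
move=> [nA _] [[cA acA] holes1 outer_min].
have deg_ge : 2 * (#|`A| - 1) <= degsum A := degsum_connected (fset_uniq A) cA.
have deg_le : degsum A <= 2 * (#|`A| - 1) := degsum_tree (fset_uniq A) cA acA.
have holes_perim : \sum_(H <- Hs) perim H = 4 * size Hs.
  rewrite big_seq (eq_bigr (fun _ => 4)) -?big_seq => [|H /HsP /holes1 size1].
    by rewrite big_const_seq count_predT iter_addn_0 mulnC.
  by case: (enum_fset H) size1 => [|c [|]] //= _; apply: perim1.
have sides := perimeter_balance; rewrite holes_perim outer_min in sides.
have : 0 < #|`A| by rewrite cardfs_gt0.
lia.
Qed.

Lemma balance_efficiently_structured : polyomino A ->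
  4 * size Hs + 2 * ceil_2sqrt (#|`A| + size Hs) = 2 * #|`A| + 2 ->
  efficiently_structured A (size Hs).
Proof.
move=> [nA cA] balance.
have deg_ge : 2 * (#|`A| - 1) <= degsum A := degsum_connected (fset_uniq A) cA.
have outer_ge := outer_perimeter_ge.
have holes_ge : 4 * size Hs + 2 * \sum_(H <- Hs) (1 < #|`H|) <= \sum_(H <- Hs) perim H.
  have -> : 4 * size Hs + 2 * \sum_(H <- Hs) (1 < #|`H|) = \sum_(H <- Hs) (4 + 2 * (1 < #|`H|)).
    by rewrite big_split -big_distrr big_const_seq count_predT iter_addn_0 mulnC.
  rewrite big_seq [X in _ <= X]big_seq; apply: leq_sum => H /HsP [nH _ _ _].
  by move: nH; rewrite -cardfs_gt0; apply: perim_nonempty_ge (fset_uniq H).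
have sides := perimeter_balance.
have n_gt0 : 0 < #|`A| by rewrite cardfs_gt0.
have [deg_eq big_holes0 outer_eq] : [/\ degsum A = 2 * (#|`A| - 1),
    \sum_(H <- Hs) (1 < #|`H|) = 0 & outer_perimeter A = 2 * ceil_2sqrt (#|`A| + size Hs)].
  by split; lia.
split => // [|H /HsP HHs].
  have deg_lt : degsum A < 2 * #|`A| by rewrite deg_eq; lia.
  by split => //; apply: acyclic_of_degsum (fset_uniq A) cA deg_lt.
move/eqP: big_holes0; rewrite sum_nat_seq_eq0 => /allP /(_ H HHs) /=.
have [nH _ _ _] := (HsP H).2 HHs; rewrite -cardfs_gt0 in nH.
by case: ltnP => // le1 _; apply/eqP; rewrite eqn_leq le1.
Qed.

End Holes.

Lemma M_eq_nat (n h : nat) :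
  (h%:R : rat)%R = M n h <-> 4 * h + 2 * ceil_2sqrt (n + h) = 2 * n + 2.
Proof.
rewrite /M; split => [eq_h|balance].
  by apply/eqP; rewrite -(eqr_nat rat) natrD !natrM eq_h; apply/eqP; field.
by rewrite -balance natrD !natrM; field.
Qed.

Local Open Scope fset_scope.

Theorem lemma3 (A : {fset cell}) (n h : nat) :
  polyomino A -> #|`A| = n -> num_holes A h ->
  (efficiently_structured A h <-> (h%:R : rat)%R = M n h).
Proof.
move=> polyA <- [Hs [uHs HsP <-]]; rewrite M_eq_nat; split.
  exact: efficiently_structured_balance.
exact: balance_efficiently_structured.
Qed.
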